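(* Let $\widehat{G}$ be a signed separable bigraph which contains no signed graph in $\mathcal{C}\cup D$ as an induced subgraph. Suppose that a vertex set $S$ minimally separates components $H$ and $H'$ of $\widehat G-S$. Then (i) $S$ induces a positive biclique in $\widehat{G}$, and (ii) any two vertices of $S$ in the same part of the bipartition of $\widehat{G}$ have a common neighbour in $H$ and a common neighbour in $H'$.
   Context: A signed graph is a finite simple graph each of whose edges is assigned a sign, positive or negative. A signed bigraph is a signed graph whose underlying graph is bipartite. A bigraph is separable if it contains an induced $2K_2$. An induced subgraph is obtained by deleting vertices only; $\widehat G$ contains $H$ as an induced subgraph if some induced subgraph is isomorphic to $H$ via a sign-preserving isomorphism. A signed graph is positive if all edges are positive and non-trivial if it has at least one edge. In a bigraph with bipartition $(X,Y)$, a subgraph $H$ is a biclique if every vertex of $V(H)\cap X$ is adjacent to every vertex of $V(H)\cap Y$. For a vertex set $S$ of $\widehat G$ and two distinct non-trivial connected components $H,H'$ of $\widehat G-S$, $S$ minimally separates $H$ and $H'$ if every vertex of $S$ has a neighbour in $H$ and a neighbour in $H'$. $\mathcal C$ is the set of all signed cycles of length $2k$ with $k\ge 3$ (all sign assignments). $D$ is the set of signed graphs on parts $\{a_1,a_2,a_3\}$, $\{b_1,b_2,b_3\}$ with edges exactly $a_1b_1,a_1b_2,a_2b_1,a_2b_2,a_2b_3,a_3b_2,a_3b_3$ (a 6-cycle $a_1b_1a_2b_3a_3b_2a_1$ plus the chord $a_2b_2$), where $a_2b_2$ is negative and the other six edges have arbitrary signs. *)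

From mathcomp Require Import all_boot.
Set Implicit Arguments. Unset Strict Implicit. Unset Printing Implicit Defensive.

(* A signed graph on a finite vertex type T: adjacency [adj] (symmetric,
   irreflexive) and a sign [sgn] (true = positive, false = negative),
   symmetric; only its values on edges matter. *)
Definition signed_graph (T : finType) (adj : rel T) (sgn : T -> T -> bool) :=
  (forall x, ~~ adj x x) /\ (forall x y, adj x y = adj y x) /\
  (forall x y, adj x y -> sgn x y = sgn y x).

Definition signed_bigraph (T : finType) (adj : rel T) (sgn : T -> T -> bool)
  (part : T -> bool) :=
  signed_graph adj sgn /\ (forall x y, adj x y -> part x != part y).

Definition induced_copy (U T : finType) (adjU : rel U) (sgnU : U -> U -> bool)
  (adj : rel T) (sgn : T -> T -> bool) (f : U -> T) :=
  injective f /\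
  (forall u v, adj (f u) (f v) = adjU u v) /\
  (forall u v, adjU u v -> sgn (f u) (f v) = sgnU u v).

Definition contains_induced (U T : finType) (adjU : rel U) (sgnU : U -> U -> bool)
  (adj : rel T) (sgn : T -> T -> bool) :=
  exists f : U -> T, induced_copy adjU sgnU adj sgn f.

(* The cycle C_n on 'I_n: i ~ i+1 (mod n); sigma i is the sign of edge {i, i+1}. *)
Definition cyc_adj (n : nat) : rel 'I_n :=
  fun u v => ((u.+1 %% n == v) || (v.+1 %% n == u)) && (u != v).
Definition cyc_sgn (n : nat) (sigma : 'I_n -> bool) (u v : 'I_n) : bool :=
  if u.+1 %% n == v then sigma u else sigma v.

(* The family D on vertices (false,i) = a_(i+1), (true,j) = b_(j+1):
   edges a_i b_j with |i - j| <= 1, i.e. a1b1,a1b2,a2b1,a2b2,a2b3,a3b2,a3b3.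
   tau i j is the sign of a_(i+1) b_(j+1); a2b2 must be negative. *)
Definition D_adj : rel (bool * 'I_3) :=
  fun u v => (u.1 != v.1) &&
    [|| nat_of_ord u.2 == v.2, u.2 == v.2.+1 :> nat | u.2.+1 == v.2 :> nat].
Definition D_sgn (tau : 'I_3 -> 'I_3 -> bool) (u v : bool * 'I_3) : bool :=
  if u.1 then tau v.2 u.2 else tau u.2 v.2.

Definition C_free (T : finType) (adj : rel T) (sgn : T -> T -> bool) :=
  forall (k : nat) (sigma : 'I_(2 * k) -> bool), 3 <= k ->
    ~ contains_induced (@cyc_adj (2 * k)) (cyc_sgn sigma) adj sgn.
Definition D_free (T : finType) (adj : rel T) (sgn : T -> T -> bool) :=
  forall tau : 'I_3 -> 'I_3 -> bool, tau (inord 1) (inord 1) = false ->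
    ~ contains_induced D_adj (D_sgn tau) adj sgn.

Definition separable (T : finType) (adj : rel T) :=
  exists a b c d : T, [/\ uniq [:: a; b; c; d], adj a b, adj c d &
    [/\ ~~ adj a c, ~~ adj a d, ~~ adj b c & ~~ adj b d]].

Definition adj_minus (T : finType) (adj : rel T) (S : {set T}) : rel T :=
  fun x y => [&& adj x y, x \notin S & y \notin S].

Definition component_of (T : finType) (adj : rel T) (S : {set T}) (H : {set T}) :=
  exists2 x, x \notin S & H = [set y | connect (adj_minus adj S) x y].

Definition nontrivial (T : finType) (adj : rel T) (H : {set T}) :=
  exists u, exists2 v, (u \in H) && (v \in H) & adj u v.

Definition minimally_separates (T : finType) (adj : rel T) (S H H' : {set T}) :=
  [/\ component_of adj S H, component_of adj S H', H != H',
      nontrivial adj H /\ nontrivial adj H' &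
      forall x, x \in S -> (exists2 y, y \in H & adj x y) /\
                           (exists2 y, y \in H' & adj x y)].

From mathcomp Require Import all_boot zify.
From Stdlib Require Import Classical.
Set Implicit Arguments. Unset Strict Implicit. Unset Printing Implicit Defensive.

(* Join two vertices x, y of S by shortest paths through H and through H'; both
   exist because S separates minimally, both are chordless, and their interiors
   lie in different components of G - S. If x and y are not adjacent the two
   paths form an induced cycle, which is even since G is bipartite, hence of
   length 4 because G is C-free. So two vertices on the same side have a common
   neighbour in H and in H', and two vertices on opposite sides are adjacent.
   In the latter case each path closes up with the edge xy into an induced even
   cycle, so both paths have length 3, and if xy were negative they would span
   a member of D. *)

Section Paths.
Variables (T : finType) (adj : rel T).
Hypothesis adj_sym : symmetric adj.

Definition induced_cycle n (f : nat -> T) :=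
  (forall i j, i < j < n -> f i != f j) /\
  (forall i j, i < j < n -> adj (f i) (f j) = (j == i.+1) || (i == 0) && (j == n.-1)).

(* The pair of endpoints [(0, m)] is left unconstrained. *)
Definition chordless m (p : nat -> T) :=
  (forall i j, i < j <= m -> p i != p j) /\
  (forall i j, i < j <= m -> (0 < i) || (j < m) -> adj (p i) (p j) = (j == i.+1)).

Definition interiors_apart m (p : nat -> T) m' (q : nat -> T) :=
  forall i j, 0 < i < m -> 0 < j < m' -> p i != q j /\ ~~ adj (p i) (q j).

Lemma chordless_close m p :
  2 <= m -> chordless m p -> adj (p 0) (p m) -> induced_cycle m.+1 p.
Proof.
move=> m2 [p_inj p_adj] adj0m; split=> i j ij; first by apply: p_inj; lia.
case: (boolP ((0 < i) || (j < m))) => [inner|outer]; first by rewrite p_adj //; lia.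
have [-> ->] : i = 0 /\ j = m by lia.
by rewrite adj0m; lia.
Qed.

Lemma chordless_glue m p m' q :
  2 <= m -> 2 <= m' -> chordless m p -> chordless m' q ->
  p 0 = q 0 -> p m = q m' -> ~~ adj (p 0) (p m) -> interiors_apart m p m' q ->
  induced_cycle (m + m') (fun i => if i <= m then p i else q (m + m' - i)).
Proof.
move=> m2 m2' [p_inj p_adj] [q_inj q_adj] e0 em nadj apart.
have pc i j : i < j <= m -> adj (p i) (p j) = (j == i.+1).
  move=> ij; case: (boolP ((0 < i) || (j < m))) => [inner|outer]; first exact: p_adj.
  have [-> ->] : i = 0 /\ j = m by lia.
  by rewrite (negbTE nadj); lia.
have qc i j : i < j <= m' -> adj (q i) (q j) = (j == i.+1).
  move=> ij; case: (boolP ((0 < i) || (j < m'))) => [inner|outer]; first exact: q_adj.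
  have [-> ->] : i = 0 /\ j = m' by lia.
  by rewrite -e0 -em (negbTE nadj); lia.
set F := fun i => _.
have FL i : i <= m -> F i = p i by rewrite /F => ->.
have FR i : m < i -> F i = q (m + m' - i) by rewrite /F ltnNge => /negbTE ->.
split=> i j ij; case: (leqP j m) => jm.
- by rewrite !FL; [apply: p_inj | lia | lia]; lia.
- rewrite (FR j) //; case: (leqP i m) => im; last first.
    by rewrite FR // eq_sym; apply: q_inj; lia.
  rewrite FL //; case: (posnP i) => [->|i0]; first by rewrite e0; apply: q_inj; lia.
  have [->|lt] : i = m \/ i < m by lia.
    by rewrite em eq_sym; apply: q_inj; lia.
  by have [] := apart i (m + m' - j); [lia | lia |].
- by rewrite !FL ?pc; lia.
- rewrite (FR j) //; case: (leqP i m) => im; last by rewrite FR // adj_sym qc; lia.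
  rewrite FL //; case: (posnP i) => [->|i0]; first by rewrite e0 qc; lia.
  have [->|lt] : i = m \/ i < m by lia.
    by rewrite em adj_sym qc; lia.
  have [] := apart i (m + m' - j); [lia | lia | move=> _ /negbTE->; lia].
Qed.

Section Walks.
Variable H : {set T}.

Definition walk_through x y m (p : nat -> T) :=
  [/\ p 0 = x, p m = y, 2 <= m, (forall i, 0 < i < m -> p i \in H) &
      (forall i, i < m -> adj (p i) (p i.+1))].

Lemma walk_shortcut x y m p i d :
  walk_through x y m p -> i + d < m -> 2 <= m - d -> adj (p i) (p (i + d).+1) ->
  walk_through x y (m - d) (fun k => if k <= i then p k else p (k + d)).
Proof.
move=> [p0 pm _ pH p_adj] lt md shortcut; split=> //.
- by case: leqP => ?; [lia | rewrite -pm; congr p; lia].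
- by move=> k k_inner; case: leqP => ?; apply: pH; lia.
- move=> k km; case: (ltngtP k i) => [ki|ik|->].
  + by apply: p_adj; lia.
  + by rewrite addSn; apply: p_adj; lia.
  + by rewrite addSn.
Qed.

Lemma exists_shortest_walk x y m p : walk_through x y m p ->
  exists m0 p0, walk_through x y m0 p0 /\
    forall m1 p1, m1 < m0 -> ~ walk_through x y m1 p1.
Proof.
elim: m {-2}m (leqnn m) p => [|n IH] m mn p w; first by case: w; lia.
have [[m1 [p1 [m1m w1]]]|shortest] :=
  classic (exists m1 p1, m1 < m /\ walk_through x y m1 p1).
  by apply: (IH m1 _ p1 w1); lia.
by exists m, p; split=> // m1 p1 m1m w1; apply: shortest; exists m1, p1.
Qed.

Lemma shortest_walk_chordless x y m p :
  x \notin H -> y \notin H -> x != y -> walk_through x y m p ->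
  (forall m1 p1, m1 < m -> ~ walk_through x y m1 p1) -> chordless m p.
Proof.
move=> xH yH xy w shortest; have [p0 pm m2 pH p_adj] := w.
split=> i j ij.
- apply/eqP; have [jm|->] : j < m \/ j = m by lia.
  + move=> pij; case: (posnP i) => [i0|i_pos].
      by move: xH; rewrite -p0 -i0 pij pH //; lia.
    apply: (shortest (m - (j - i))); first lia.
    apply: (walk_shortcut (i := i) w); [lia | lia |].
    by rewrite pij subnKC ?p_adj //; lia.
  + move=> pij; case: (posnP i) => [i0|i_pos].
      by move: xy; rewrite -p0 -pm -i0 pij eqxx.
    by move: yH; rewrite -pm -pij pH //; lia.
- move=> inner; case: (ltngtP j i.+1) => [|ji|->]; [lia | | by rewrite p_adj; lia].
  apply/negbTE/negP => chord; apply: (shortest (m - (j - i.+1))); first lia.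
  apply: (walk_shortcut (i := i) w); [lia | lia |].
  by rewrite -addSn subnKC // ltnW.
Qed.

Lemma walk_parity (part : T -> bool) x y m p :
  (forall u v, adj u v -> part u != part v) -> walk_through x y m p ->
  part y = part x (+) odd m.
Proof.
move=> bip [p0 pm _ _ p_adj].
suff parity i : i <= m -> part (p i) = part x (+) odd i by rewrite -pm parity.
elim: i => [|i IH] im; first by rewrite p0 addbF.
have := bip _ _ (p_adj i im); rewrite IH ?(ltnW im) //= addbN.
by case: (part (p i.+1)); case: (_ (+) _).
Qed.

End Walks.

Section Components.
Variable S : {set T}.

Lemma adj_minus_sym : symmetric (adj_minus adj S).
Proof. by move=> x y; rewrite /adj_minus adj_sym [(x \notin S) && _]andbC. Qed.

Lemma component_notin H u : component_of adj S H -> u \in H -> u \notin S.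
Proof.
case=> x xS ->; rewrite inE => /connectP [s s_path ->].
by elim: s x xS s_path => [//|z s IH] x xS /= /andP [/and3P [_ _ zS] /IH]; apply.
Qed.

Lemma component_connect H u v :
  component_of adj S H -> u \in H -> v \in H -> connect (adj_minus adj S) u v.
Proof.
case=> x _ ->; rewrite !inE => xu; apply: connect_trans.
by rewrite sym_connect_sym //; exact: adj_minus_sym.
Qed.

Lemma component_closed H u v :
  component_of adj S H -> u \in H -> connect (adj_minus adj S) u v -> v \in H.
Proof. by case=> x _ ->; rewrite !inE; apply: connect_trans. Qed.

Lemma component_adj_closed H u v :
  component_of adj S H -> u \in H -> v \notin S -> adj u v -> v \in H.
Proof.
move=> HH uH vS uv; apply: (component_closed HH uH); apply: connect1.
by rewrite /adj_minus uv (component_notin HH uH) vS.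
Qed.

Lemma components_eq H H' u :
  component_of adj S H -> component_of adj S H' -> u \in H -> u \in H' -> H = H'.
Proof.
move=> HH HH' uH uH'; apply/setP => v; apply/idP/idP => vK.
- exact: component_closed HH' uH' (component_connect HH uH vK).
- exact: component_closed HH uH (component_connect HH' uH' vK).
Qed.

Lemma components_nonadj H H' u v :
  component_of adj S H -> component_of adj S H' -> H != H' ->
  u \in H -> v \in H' -> ~~ adj u v.
Proof.
move=> HH HH' HH'ne uH vH'; apply: contra HH'ne => uv; apply/eqP.
exact: components_eq HH HH' (component_adj_closed HH uH (component_notin HH' vH') uv) vH'.
Qed.

Lemma exists_walk_through H x y a b :
  component_of adj S H -> a \in H -> adj x a -> b \in H -> adj y b ->
  exists m p, walk_through H x y m p.
Proof.
move=> HH aH xa bH yb; have /connectP [s s_path sb] := component_connect HH aH bH.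
exists (size s).+2, (nth y [:: x, a & s]); split=> //.
- by rewrite nth_default.
- case=> [//|i] /= i_s.
  by apply: (component_closed HH aH); apply: (path_connect s_path); apply: mem_nth.
- case=> [//|i] /= i_s; have [i_lt|->] : i < size s \/ i = size s by lia.
    by move/pathP: s_path => /(_ y i i_lt) /andP [].
  by rewrite [nth y s _]nth_default // (set_nth_default a) // -last_nth -sb adj_sym.
Qed.

Lemma exists_chordless_walk (part : T -> bool) H x y :
  (forall u v, adj u v -> part u != part v) -> component_of adj S H ->
  x \in S -> y \in S -> x != y ->
  (exists2 a, a \in H & adj x a) -> (exists2 b, b \in H & adj y b) ->
  exists m p, [/\ walk_through H x y m p, chordless m p & odd m = (part x != part y)].
Proof.
move=> bip HH xS yS xy [a aH xa] [b bH yb].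
have [m0 [p0 /exists_shortest_walk [m [p [w shortest]]]]] :=
  exists_walk_through HH aH xa bH yb.
have xH : x \notin H by apply: contraL xS => /(component_notin HH)/negbTE->.
have yH : y \notin H by apply: contraL yS => /(component_notin HH)/negbTE->.
exists m, p; split; first exact: w.
  exact: shortest_walk_chordless xH yH xy w shortest.
by rewrite (walk_parity bip w); case: (part x); case: (odd m).
Qed.

End Components.
End Paths.

Lemma cyc_adj_sym n : symmetric (@cyc_adj n).
Proof. by move=> u v; rewrite /cyc_adj orbC [u == v]eq_sym. Qed.

Lemma cyc_adj_lt n (u v : 'I_n) : u < v ->
  cyc_adj u v = (v == u.+1 :> nat) || (u == 0 :> nat) && (v == n.-1 :> nat).
Proof.
move=> uv; have vn := ltn_ord v; rewrite /cyc_adj.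
have -> : (u != v) = true by apply: contraTneq uv => ->; rewrite ltnn.
rewrite andbT modn_small; last exact: leq_ltn_trans uv vn.
have [vn1|vn1] : v.+1 < n \/ v.+1 = n by lia.
  by rewrite modn_small //; lia.
by rewrite vn1 modnn; lia.
Qed.

Lemma D_adj_inj (u v : bool * 'I_3) : D_adj u =1 D_adj v -> u = v.
Proof.
move=> uv; apply/eqP; have W b k (k3 : k < 3) := uv (b, Ordinal k3).
move: (W false 0 isT) (W false 1 isT) (W false 2 isT) (W true 0 isT) (W true 1 isT) (W true 2 isT).
by clear W uv; move: u v; do 2!case=> [[] [[|[|[|?]]] ?]].
Qed.

Section SignedGraphs.
Variables (T : finType) (adj : rel T) (sgn : T -> T -> bool).
Hypotheses (adj_irr : irreflexive adj) (adj_sym : symmetric adj)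
  (sgn_sym : forall x y, adj x y -> sgn x y = sgn y x).

Lemma induced_cycle_contains n f : 2 < n -> induced_cycle adj n f ->
  contains_induced (@cyc_adj n) (cyc_sgn (fun i : 'I_n => sgn (f i) (f (i.+1 %% n))))
    adj sgn.
Proof.
move=> n2 [f_inj f_adj].
have fadj (u v : 'I_n) : adj (f u) (f v) = cyc_adj u v.
  case: (ltngtP u v) => [uv|vu|/val_inj->]; last by rewrite adj_irr /cyc_adj eqxx andbF.
  - by rewrite f_adj ?cyc_adj_lt // uv ltn_ord.
  - by rewrite adj_sym cyc_adj_sym f_adj ?cyc_adj_lt // vu ltn_ord.
exists (fun i : 'I_n => f i); split; [|split] => //.
- move=> u v fuv; apply/val_inj; case: (ltngtP u v) => [uv|vu|//].
  + by have := f_inj u v; rewrite uv ltn_ord fuv eqxx => /(_ isT).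
  + by have := f_inj v u; rewrite vu ltn_ord fuv eqxx => /(_ isT).
- move=> u v uv; rewrite /cyc_sgn; case: eqP => [<- //|not_uv].
  have /eqP-> : v.+1 %% n == u by case/andP: uv => /orP [/eqP|].
  by rewrite sgn_sym // fadj.
Qed.

Lemma C_free_induced_cycle n f :
  C_free adj sgn -> 6 <= n -> ~~ odd n -> ~ induced_cycle adj n f.
Proof.
move=> C_free_G n6 n_even cyc.
have [k nk] : exists k, n = 2 * k.
  by exists n./2; rewrite -[LHS]odd_double_half (negbTE n_even) add0n -mul2n.
subst n; apply: (C_free_G k _ _ (induced_cycle_contains _ cyc)); lia.
Qed.

(* [x p1 p2 y] and [x q1 q2 y] together with the edge [xy] form a copy of D
   with [a_1, a_2, a_3 = p2, x, q2] and [b_1, b_2, b_3 = p1, y, q1]. *)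
Lemma D_free_negative_edge x y p q :
  D_free adj sgn -> adj x y -> sgn x y = false ->
  chordless adj 3 p -> chordless adj 3 q ->
  p 0 = x -> p 3 = y -> q 0 = x -> q 3 = y -> interiors_apart adj 3 p 3 q -> False.
Proof.
move=> D_free_G xy sxy [_ p_adj] [_ q_adj] p0 p3 q0 q3 apart.
have cross i j : 0 < i < 3 -> 0 < j < 3 -> adj (p i) (q j) = false.
  by move=> ij ji; have [_ /negbTE] := apart i j ij ji.
have x_p1 : adj x (p 1) by rewrite -p0 p_adj.
have p1_p2 : adj (p 1) (p 2) by rewrite p_adj.
have p2_y : adj (p 2) y by rewrite -p3 p_adj.
have x_p2 : adj x (p 2) = false by rewrite -p0 p_adj.
have p1_y : adj (p 1) y = false by rewrite -p3 p_adj.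
have x_q1 : adj x (q 1) by rewrite -q0 q_adj.
have q1_q2 : adj (q 1) (q 2) by rewrite q_adj.
have q2_y : adj (q 2) y by rewrite -q3 q_adj.
have x_q2 : adj x (q 2) = false by rewrite -q0 q_adj.
have q1_y : adj (q 1) y = false by rewrite -q3 q_adj.
have table := (xy, x_p1, p1_p2, p2_y, x_p2, p1_y, x_q1, q1_q2, q2_y, x_q2, q1_y,
  cross 1 1 isT isT, cross 1 2 isT isT, cross 2 1 isT isT, cross 2 2 isT isT).
pose g (u : bool * 'I_3) :=
  nth x (if u.1 then [:: p 1; y; q 1] else [:: p 2; x; q 2]) u.2.
have g_adj u v : adj (g u) (g v) = D_adj u v.
  move: u v; do 2!case=> [[] [[|[|[|?]]] ?]] //=;
  by rewrite /g /= ?adj_irr ?table // adj_sym ?table.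
apply: (D_free_G (fun i j => sgn (g (false, i)) (g (true, j)))).
  by rewrite /g /= inordK.
exists g; split; [|split] => //.
- by move=> u v guv; apply: D_adj_inj => w; rewrite -!g_adj guv.
- by case=> [[] i] [[] j] uv; rewrite /D_sgn //= sgn_sym // g_adj.
Qed.

Lemma C_free_chordless_close m p : C_free adj sgn ->
  2 <= m -> chordless adj m p -> adj (p 0) (p m) -> odd m -> m <= 3.
Proof.
move=> C_free_G m2 p_chordless closing m_odd; rewrite leqNgt; apply/negP => long.
have cycle := chordless_close m2 p_chordless closing.
by apply: (C_free_induced_cycle C_free_G _ _ cycle); rewrite /= ?m_odd; lia.
Qed.
End SignedGraphs.

Lemma minimally_separates_sym (T : finType) (adj : rel T) (S H H' : {set T}) :
  minimally_separates adj S H H' -> minimally_separates adj S H' H.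
Proof.
case=> HH HH' HH'ne [nontriv nontriv'] nbr; split=> //; first by rewrite eq_sym.
by move=> x /nbr [].
Qed.

Section Separator.
Variables (T : finType) (adj : rel T) (sgn : T -> T -> bool) (part : T -> bool).
Variables (S H H' : {set T}).
Hypotheses (adj_irr : irreflexive adj) (adj_sym : symmetric adj)
  (sgn_sym : forall x y, adj x y -> sgn x y = sgn y x)
  (bip : forall x y, adj x y -> part x != part y)
  (C_free_G : C_free adj sgn) (D_free_G : D_free adj sgn)
  (sep : minimally_separates adj S H H').

Lemma separator_paths x y : x \in S -> y \in S -> x != y ->
  (exists m p, [/\ walk_through adj H x y m p, chordless adj m p &
                   odd m = (part x != part y)]) /\
  (exists m p, [/\ walk_through adj H' x y m p, chordless adj m p &
                   odd m = (part x != part y)]).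
Proof.
case: sep => HH HH' _ _ nbr xS yS xy.
split; apply: (@exists_chordless_walk _ _ adj_sym S) => //.
all: by [case: (nbr x xS) | case: (nbr y yS)].
Qed.

Lemma separator_interiors_apart x y m p m' q :
  walk_through adj H x y m p -> walk_through adj H' x y m' q ->
  interiors_apart adj m p m' q.
Proof.
case: sep => HH HH' HH'ne _ _ [_ _ _ pH _] [_ _ _ qH' _] i j i_inner j_inner.
have [piH qjH'] := (pH i i_inner, qH' j j_inner).
split; last exact: (components_nonadj adj_sym HH HH' HH'ne piH qjH').
apply: contraNneq HH'ne => pq.
by rewrite (components_eq adj_sym HH HH' piH) // pq.
Qed.

Lemma separator_cycle_short x y m p m' q :
  ~~ adj x y -> walk_through adj H x y m p -> chordless adj m p ->
  walk_through adj H' x y m' q -> chordless adj m' q ->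
  ~~ odd (m + m') -> m + m' < 6.
Proof.
move=> xy w p_chordless w' q_chordless even.
have [[p0 pm m2 _ _] [q0 qm m2' _ _]] := (w, w').
rewrite leqNgt; apply/negP => long.
apply: (C_free_induced_cycle adj_irr adj_sym sgn_sym C_free_G long even).
apply: (chordless_glue adj_sym m2 m2' p_chordless q_chordless); rewrite ?p0 ?q0 ?pm ?qm //.
exact: separator_interiors_apart w w'.
Qed.

Lemma separator_biclique x y :
  x \in S -> y \in S -> part x != part y -> adj x y && sgn x y.
Proof.
move=> xS yS xy_part; have xy : x != y by apply: contraNneq xy_part => ->.
have [[m [p [w p_chordless m_odd]]] [m' [q [w' q_chordless m'_odd]]]] :=
  separator_paths xS yS xy.
rewrite xy_part in m_odd m'_odd.
have [[p0 pm m2 _ _] [q0 qm m2' _ _]] := (w, w').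
have xy_adj : adj x y.
  apply: contraT => nxy.
  have short : m + m' < 6.
    by apply: (separator_cycle_short nxy w p_chordless w' q_chordless); rewrite oddD m_odd m'_odd.
  lia.
have length3 r n : 2 <= n -> chordless adj n r -> r 0 = x -> r n = y -> odd n -> n = 3.
  move=> n2 r_chordless r0 rn n_odd.
  have := C_free_chordless_close adj_irr adj_sym sgn_sym C_free_G n2 r_chordless.
  by rewrite r0 rn => /(_ xy_adj n_odd); lia.
have m_3 := length3 p m m2 p_chordless p0 pm m_odd.
have m'_3 := length3 q m' m2' q_chordless q0 qm m'_odd.
subst m m'; rewrite xy_adj /=; apply: contraT => /negbTE sxy; exfalso.
exact: (D_free_negative_edge adj_irr adj_sym sgn_sym D_free_G xy_adj sxy p_chordless q_chordless
  p0 pm q0 qm (separator_interiors_apart w w')).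
Qed.

Lemma separator_common_neighbour x y : x \in S -> y \in S -> x != y -> part x = part y ->
  exists2 z, z \in H & adj x z && adj y z.
Proof.
move=> xS yS xy xy_part.
have nxy : ~~ adj x y by apply/negP => /bip; rewrite xy_part eqxx.
have [[m [p [w p_chordless m_even]]] [m' [q [w' q_chordless m'_even]]]] :=
  separator_paths xS yS xy.
rewrite xy_part eqxx in m_even m'_even.
have short : m + m' < 6.
  by apply: (separator_cycle_short nxy w p_chordless w' q_chordless); rewrite oddD m_even m'_even.
have [p0 pm m2 pH p_adj] := w; have [_ _ m2' _ _] := w'.
have m_2 : m = 2 by lia.
subst m; exists (p 1); first exact: pH.
by rewrite -{1}p0 p_adj // -pm adj_sym p_adj.
Qed.

End Separator.

(* Separability is a standing hypothesis of the paper; this lemma does not need it. *)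
Theorem lemma4p1 (T : finType) (adj : rel T) (sgn : T -> T -> bool)
  (part : T -> bool) (S H H' : {set T}) :
  signed_bigraph adj sgn part ->
  separable adj ->
  C_free adj sgn ->
  D_free adj sgn ->
  minimally_separates adj S H H' ->
  (forall x y, x \in S -> y \in S -> part x != part y -> adj x y && sgn x y) /\
  (forall x y, x \in S -> y \in S -> x != y -> part x = part y ->
     (exists2 z, z \in H & adj x z && adj y z) /\
     (exists2 z, z \in H' & adj x z && adj y z)).
Proof.
move=> [[irr [sym sgn_sym]] bip] _ C_free_G D_free_G sep.
have adj_irr : irreflexive adj by move=> x; apply: negbTE.
split=> [x y xS yS | x y xS yS xy xy_part].
  exact: (separator_biclique adj_irr sym sgn_sym bip C_free_G D_free_G sep xS yS).
split.
  exact: (separator_common_neighbour adj_irr sym sgn_sym bip C_free_G sep xS yS xy xy_part).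
have sep' := minimally_separates_sym sep.
exact: (separator_common_neighbour adj_irr sym sgn_sym bip C_free_G sep' xS yS xy xy_part).
Qed.
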